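(* Let $n\geq 1$ be an integer, let $R$ be a commutative ring, let $\iota:\mu_n\to R^\times$ be an injective group homomorphism (extended by $\iota(0)=0$), and let $X\in R$ be an $\mathbb{S}[\mu_{n,+}]$-generator of $R$ with respect to $\iota$. Let $m$ be a positive integer. Then the class of $Y$ in the $R$-algebra $R[Y]/(Y^m-X)$ is an $\mathbb{S}[\mu_{n,+}]$-generator of $R[Y]/(Y^m-X)$, with respect to the composite of $\iota$ with the canonical map $R\to R[Y]/(Y^m-X)$.
   Context: $\mu_n$ denotes the multiplicative group of $n$-th roots of unity and $\mu_{n,+}=\mu_n\cup\{0\}$. Given a ring $A$ and an injective group homomorphism $\iota:\mu_n\to A^\times$ (with $\iota(0):=0$), an element $X\in A$ is called an $\mathbb{S}[\mu_{n,+}]$-generator of $A$ if every $z\in A$ can be written uniquely as a finite sum $z=\sum_{j\ge 0}\iota(\alpha_j)X^j$ with coefficients $\alpha_j\in\mu_n\cup\{0\}$, only finitely many nonzero. *)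

From HB Require Import structures.
From mathcomp Require Import all_boot all_order all_algebra all_field.
Set Implicit Arguments. Unset Strict Implicit. Unset Printing Implicit Defensive.
Import GRing.Theory.
Local Open Scope ring_scope.

Definition mu (n : nat) : pred algC := fun z => z ^+ n == 1.
Definition mu_plus (n : nat) : pred algC := fun z => (z == 0) || (z ^+ n == 1).

Definition inj_mu_hom (A : nzRingType) (n : nat) (iota : algC -> A) : Prop :=
  [/\ {in mu n &, {morph iota : x y / x * y}},
      {in mu n, forall x, exists y, y * iota x = 1 /\ iota x * y = 1} &
      {in mu n &, injective iota}].

Definition iota_plus (A : nzRingType) (iota : algC -> A) (z : algC) : A :=
  if z == 0 then 0 else iota z.

Definition is_Smu_generator (A : nzRingType) (n : nat) (iota : algC -> A) (X : A) : Prop :=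
  (forall z : A, exists (alpha : nat -> algC) (N : nat),
      [/\ (forall j, mu_plus n (alpha j)),
          (forall j, (N <= j)%N -> alpha j = 0) &
          z = \sum_(j < N) iota_plus iota (alpha j) * X ^+ j])
  /\
  (forall (alpha beta : nat -> algC) (N : nat),
      (forall j, mu_plus n (alpha j)) -> (forall j, mu_plus n (beta j)) ->
      (forall j, (N <= j)%N -> alpha j = 0) -> (forall j, (N <= j)%N -> beta j = 0) ->
      \sum_(j < N) iota_plus iota (alpha j) * X ^+ j =
      \sum_(j < N) iota_plus iota (beta j) * X ^+ j ->
      forall j, alpha j = beta j).

From HB Require Import structures.
From mathcomp Require Import all_boot all_order all_algebra all_field.
Import GRing.Theory.
Local Open Scope ring_scope.

(* In Q := R[Y]/(Y^m - X) the powers 1, Y, ..., Y^(m-1) form an R-basis and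
   Y^(m j + k) = X^j Y^k.  Hence the k-th coordinate of a digit expansion
   sum_i iota(a_i) Y^i is the digit expansion sum_j iota(a_(m j + k)) X^j in R.
   Existence in Q follows by interleaving expansions of the m coordinates,
   uniqueness by applying uniqueness in R to each residue class modulo m. *)

Lemma big_ord_widen_idx {R : Type} {idx : R} (op : Monoid.law idx)
    (F : nat -> R) n1 n2 :
  (n1 <= n2)%N -> (forall i, (n1 <= i)%N -> F i = idx) ->
  \big[op/idx]_(i < n2) F i = \big[op/idx]_(i < n1) F i.
Proof.
move=> le_n12 F_idx; rewrite (big_ord_widen _ _ le_n12) [RHS]big_mkcond.
by apply: eq_bigr => i _; case: ltnP => // /F_idx.
Qed.

Lemma big_ord_mul_split {R : Type} {idx : R} (op : Monoid.law idx)
    (F : nat -> R) m n :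
  \big[op/idx]_(i < m * n) F i =
  \big[op/idx]_(j < n) \big[op/idx]_(k < m) F (m * j + k)%N.
Proof.
elim: n => [|n IHn]; first by rewrite muln0 !big_ord0.
by rewrite big_ord_recr /= -IHn mulnSr big_split_ord.
Qed.

Lemma qpolyC_in_qpoly {R : comNzRingType} (h : {poly R}) (a : R) :
  qpolyC h a = in_qpoly h a%:P.
Proof.
apply: val_inj; symmetry; apply: in_qpoly_small.
exact: leq_ltn_trans (size_polyC_leq1 a) (size_mk_monic_gt1 h).
Qed.

Definition Smu_sum {A : nzRingType} (iota : algC -> A) (X : A)
    (alpha : nat -> algC) (N : nat) : A :=
  \sum_(j < N) iota_plus iota (alpha j) * X ^+ j.

Definition Smu_spanning {A : nzRingType} (n : nat) (iota : algC -> A) (X : A) :=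
  forall z : A, exists (alpha : nat -> algC) (N : nat),
    [/\ forall j, mu_plus n (alpha j), forall j, (N <= j)%N -> alpha j = 0
      & z = Smu_sum iota X alpha N].

Definition Smu_unique {A : nzRingType} (n : nat) (iota : algC -> A) (X : A) :=
  forall (alpha beta : nat -> algC) (N : nat),
    (forall j, mu_plus n (alpha j)) -> (forall j, mu_plus n (beta j)) ->
    (forall j, (N <= j)%N -> alpha j = 0) -> (forall j, (N <= j)%N -> beta j = 0) ->
    Smu_sum iota X alpha N = Smu_sum iota X beta N -> forall j, alpha j = beta j.

Lemma iota_plus_rmorph {A B : nzRingType} (f : {rmorphism A -> B})
    (iota : algC -> A) (a : algC) :
  iota_plus (fun z => f (iota z)) a = f (iota_plus iota a).
Proof. by rewrite /iota_plus; case: ifP; rewrite ?rmorph0. Qed.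

Lemma Smu_sum_widen {A : nzRingType} (iota : algC -> A) (X : A)
    (alpha : nat -> algC) N1 N2 :
  (N1 <= N2)%N -> (forall j, (N1 <= j)%N -> alpha j = 0) ->
  Smu_sum iota X alpha N2 = Smu_sum iota X alpha N1.
Proof.
move=> le_N12 alpha0.
apply: (big_ord_widen_idx _ (fun j => iota_plus iota (alpha j) * X ^+ j)) => // j.
by move/alpha0 ->; rewrite /iota_plus eqxx mul0r.
Qed.

Section AdjoinRoot.

Variables (R : comNzRingType) (X : R) (m : nat).
Hypothesis m_gt0 : (0 < m)%N.

Local Notation h := ('X^m - X%:P).
Local Notation Q := {poly %/ h}.
Local Notation qY := (in_qpoly h 'X).

Lemma mk_monic_XnsubC : mk_monic h = h.
Proof. by rewrite /mk_monic size_XnsubC // monicXnsubC // ltnS m_gt0. Qed.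

Lemma size_qpoly_XnsubC (z : Q) : (size (val z) <= m)%N.
Proof.
have size_h : size (mk_monic h) = m.+1 by rewrite mk_monic_XnsubC size_XnsubC.
by rewrite -ltnS -size_h size_mk_monic.
Qed.

Lemma qpoly_XnsubC_eq_coef (z1 z2 : Q) :
  (forall k, (k < m)%N -> (val z1)`_k = (val z2)`_k) -> z1 = z2.
Proof.
move=> eq_coef; apply/val_inj/polyP => k.
case: (ltnP k m) => [/eq_coef // | le_mk].
by rewrite !nth_default // (leq_trans (size_qpoly_XnsubC _) le_mk).
Qed.

Lemma qY_expn_XnsubC : qY ^+ m = qpolyC h X.
Proof.
have in_qpoly_h : in_qpoly h h = 0.
  by apply: val_inj; rewrite /= mk_monic_XnsubC Pdiv.RingMonic.rmodpp ?monicXnsubC.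
apply/eqP; rewrite -subr_eq0 -in_qpoly_h.
by rewrite -rmorphXn qpolyC_in_qpoly -rmorphB.
Qed.

Lemma qY_expn i : qY ^+ i = qpolyC h (X ^+ (i %/ m)) * qY ^+ (i %% m).
Proof. by rewrite {1}(divn_eq i m) exprD mulnC exprM qY_expn_XnsubC rmorphXn. Qed.

Lemma val_qpoly_sum_small (d : nat -> R) :
  val (\sum_(k < m) qpolyC h (d k) * qY ^+ k) = \poly_(k < m) d k.
Proof.
have -> : \sum_(k < m) qpolyC h (d k) * qY ^+ k = in_qpoly h (\poly_(k < m) d k).
  rewrite poly_def rmorph_sum; apply: eq_bigr => k _.
  by rewrite qpolyC_in_qpoly -rmorphXn -rmorphM mul_polyC.
by apply: in_qpoly_small; rewrite mk_monic_XnsubC size_XnsubC // ltnS size_poly.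
Qed.

Lemma qpoly_sum_regroup (c : nat -> R) M :
  \sum_(i < m * M) qpolyC h (c i) * qY ^+ i =
  \sum_(k < m) qpolyC h (\sum_(j < M) c (m * j + k)%N * X ^+ j) * qY ^+ k.
Proof.
rewrite (big_ord_mul_split _ (fun i => qpolyC h (c i) * qY ^+ i)) exchange_big /=.
apply: eq_bigr => k _; rewrite rmorph_sum mulr_suml; apply: eq_bigr => j _.
have [mod_k div_k] : ((m * j + k) %% m = k /\ (m * j + k) %/ m = j)%N.
  by rewrite mulnC modnMDl modn_small // divnMDl // divn_small // addn0.
by rewrite qY_expn mod_k div_k mulrA -rmorphM.
Qed.

Lemma coef_qpoly_sum (c : nat -> R) M k : (k < m)%N ->
  (val (\sum_(i < m * M) qpolyC h (c i) * qY ^+ i))`_k =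
  \sum_(j < M) c (m * j + k)%N * X ^+ j.
Proof.
move=> lt_km; rewrite qpoly_sum_regroup.
rewrite (val_qpoly_sum_small (fun k => \sum_(j < M) c (m * j + k)%N * X ^+ j)).
by rewrite coef_poly lt_km.
Qed.

Variables (n : nat) (iota : algC -> R).

Local Notation iotaQ := (fun z => qpolyC h (iota z)).

Lemma coef_Smu_sum_qpoly (alpha : nat -> algC) M k : (k < m)%N ->
  (val (Smu_sum iotaQ qY alpha (m * M)))`_k =
  Smu_sum iota X (fun j => alpha (m * j + k)%N) M.
Proof.
move=> lt_km; rewrite /Smu_sum.
under eq_bigr do rewrite (iota_plus_rmorph (qpolyC h)).
exact: (coef_qpoly_sum (fun i => iota_plus iota (alpha i))).
Qed.

Lemma Smu_spanning_adjoin_root :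
  Smu_spanning n iota X -> Smu_spanning n iotaQ qY.
Proof.
move=> span z.
have /fin_all_exists [P P_spec] : forall k : 'I_m, exists p : (nat -> algC) * nat,
    [/\ forall j, mu_plus n (p.1 j), forall j, (p.2 <= j)%N -> p.1 j = 0
      & (val z)`_k = Smu_sum iota X p.1 p.2].
  by move=> k; have [alpha [N]] := span (val z)`_k; exists (alpha, N).
pose M := (\max_(k < m) (P k).2)%N.
have P_vanish k j : (M <= j)%N -> (P k).1 j = 0.
  move=> le_Mj; have [_ vanish _] := P_spec k; apply: vanish.
  exact: leq_trans (@leq_bigmax _ (fun k : 'I_m => (P k).2) k) le_Mj.
pose mod_ord i : 'I_m := Ordinal (ltn_pmod i m_gt0).
have mod_ordK j (k : 'I_m) : mod_ord (m * j + k)%N = k.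
  by apply: val_inj; rewrite /= mulnC modnMDl modn_small.
exists (fun i => (P (mod_ord i)).1 (i %/ m)%N), (m * M)%N; split.
- by move=> j; have [] := P_spec (mod_ord j).
- by move=> j le_mMj; apply: P_vanish; rewrite leq_divRL // mulnC.
apply: qpoly_XnsubC_eq_coef => k lt_km; rewrite coef_Smu_sum_qpoly //.
pose k' := Ordinal lt_km; have [_ vanish ->] := P_spec k'.
rewrite -(Smu_sum_widen iota X _ _ _ (@leq_bigmax _ (fun k : 'I_m => (P k).2) k') vanish).
apply: eq_bigr => j _; rewrite (mod_ordK j k') /=.
by rewrite mulnC divnMDl // divn_small // addn0.
Qed.

Lemma Smu_unique_adjoin_root :
  Smu_unique n iota X -> Smu_unique n iotaQ qY.
Proof.
move=> uniq alpha beta N mu_alpha mu_beta alpha0 beta0 eq_sum i.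
have le_N_mN : (N <= m * N)%N by rewrite leq_pmull.
have {}eq_sum : Smu_sum iotaQ qY alpha (m * N) = Smu_sum iotaQ qY beta (m * N).
  by rewrite !(Smu_sum_widen _ _ _ _ _ le_N_mN).
have vanish_class (gamma : nat -> algC) k :
    (forall j, (N <= j)%N -> gamma j = 0) ->
    forall j, (N <= j)%N -> gamma (m * j + k)%N = 0.
  move=> gamma0 j le_Nj; apply/gamma0/(leq_trans le_Nj).
  exact: leq_trans (leq_pmull _ m_gt0) (leq_addr _ _).
have lt_im : (i %% m < m)%N by rewrite ltn_mod.
rewrite (divn_eq i m) mulnC.
apply: (uniq (fun j => alpha (m * j + i %% m)%N) (fun j => beta (m * j + i %% m)%N) N)
  => //.
- exact: vanish_class.
- exact: vanish_class.
- have := congr1 (fun z : Q => (val z)`_(i %% m)) eq_sum.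
  by rewrite /= !coef_Smu_sum_qpoly.
Qed.

End AdjoinRoot.

Theorem proposition5p4 (n : nat) (R : comNzRingType) (iota : algC -> R) (X : R) (m : nat) :
  (0 < n)%N ->
  inj_mu_hom n iota ->
  is_Smu_generator n iota X ->
  (0 < m)%N ->
  is_Smu_generator n (fun z => qpolyC ('X^m - X%:P) (iota z))
                     (in_qpoly ('X^m - X%:P) 'X).
Proof.
move=> _ _ [span uniq] m_gt0; split.
- exact: Smu_spanning_adjoin_root.
- exact: Smu_unique_adjoin_root.
Qed.
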